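(* If $G$ is a connected graph with at least one edge, with girth at least five and with no vertices of degree one, then $KB_e(G)\cong G$.
   Context: All graphs are finite, simple and undirected. The girth of a graph is the length of a shortest cycle (infinite if acyclic). A biclique of a graph $G$ is a maximal (with respect to inclusion) induced subgraph of $G$ that is a complete bipartite graph $K_{p,q}$ with $p,q\ge 1$. The edge-biclique graph $KB_e(G)$ is the graph with one vertex for each biclique of $G$, in which two distinct vertices are adjacent if and only if the corresponding bicliques have at least one edge in common. *)

From mathcomp Require Import all_boot.
Set Implicit Arguments. Unset Strict Implicit. Unset Printing Implicit Defensive.

Section Graphs.
Variable T : finType.
Implicit Types (e : rel T) (S : {set T}).

Definition simple_graph e : Prop := symmetric e /\ irreflexive e.

Definition connected_graph e : Prop := forall x y : T, connect e x y.

Definition has_edge e : Prop := exists x y : T, e x y.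

Definition degree e (x : T) : nat := #|[set y | e x y]|.

Definition has_cycle_of_length e (k : nat) : Prop :=
  exists s : seq T, [/\ size s = k, 3 <= k, uniq s & cycle e s].

(* girth (length of a shortest cycle, infinite if acyclic) is at least g *)
Definition girth_ge e (g : nat) : Prop :=
  forall k, k < g -> ~ has_cycle_of_length e k.

Definition induces_complete_bipartite e S : bool :=
  [exists A : {set T}, exists B : {set T},
    [&& A :|: B == S, [disjoint A & B], A != set0, B != set0,
        [forall a in A, forall b in B, e a b],
        [forall a in A, forall a' in A, ~~ e a a'] &
        [forall b in B, forall b' in B, ~~ e b b']]].

Definition is_biclique e S : bool :=
  induces_complete_bipartite e S &&
  [forall S' : {set T}, (S \subset S') && induces_complete_bipartite e S' ==> (S' == S)].

Definition biclique e := {S : {set T} | is_biclique e S}.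

(* two bicliques share an edge (of G, hence of both induced subgraphs) *)
Definition share_edge e S1 S2 : bool :=
  [exists x in S1 :&: S2, exists y in S1 :&: S2, e x y].

Definition KBe_adj e (B1 B2 : biclique e) : bool :=
  (B1 != B2) && share_edge e (val B1) (val B2).

End Graphs.

Definition graph_iso (T1 T2 : Type) (e1 : T1 -> T1 -> bool) (e2 : T2 -> T2 -> bool) : Prop :=
  exists f : T1 -> T2, bijective f /\ forall x y, e2 (f x) (f y) = e1 x y.

From mathcomp Require Import all_boot.
Set Implicit Arguments. Unset Strict Implicit. Unset Printing Implicit Defensive.

(* If G has girth at least 5 it has no triangles and no 4-cycles, and then:
   - every induced complete bipartite subgraph K_{p,q} has p = 1 or q = 1
     (two vertices on each side would span a 4-cycle), so it is contained in
     the closed neighbourhood N[c] of its centre c;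
   - if moreover every vertex has at least two neighbours, each N[v] induces
     a star K_{1,deg v} (triangle-freeness) that is inclusion-maximal, so the
     bicliques of G are exactly the sets N[v], and v |-> N[v] is injective;
   - an edge lying in N[u] and in N[v] with u <> v must be the edge uv.
   Hence v |-> N[v] is an isomorphism G ~ KB_e(G).  A connected graph with an
   edge and no vertex of degree one has minimum degree at least two, which
   supplies the extra hypothesis. *)

Definition closed_nbhd (T : finType) (e : rel T) (v : T) : {set T} :=
  v |: [set y | e v y].

Lemma in_closed_nbhd (T : finType) (e : rel T) v x :
  (x \in closed_nbhd e v) = (x == v) || e v x.
Proof. by rewrite !inE. Qed.

Lemma neighbour_avoiding (T : finType) (e : rel T) :
  connected_graph e -> has_edge e -> (forall x : T, degree e x != 1) ->
  forall v c, exists2 y, e v y & y != c.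
Proof.
move=> conn [x [y xy]] nodeg1 v c.
have deg_pos : 0 < degree e v.
  apply/card_gt0P; case/connectP: (conn v x) => [[|z p]] /=.
    by move=> _ xv; exists y; rewrite inE -xv.
  by case/andP=> vz _ _; exists z; rewrite inE.
have /card_gt1P [y1 [y2 []]] : 1 < degree e v.
  by move: (nodeg1 v) deg_pos; case: (degree e v) => [|[|n]].
rewrite !inE => vy1 vy2 y12.
by case: (eqVneq y1 c) => [y1c|]; [exists y2; rewrite // -y1c eq_sym | exists y1].
Qed.

Section GirthFive.
Variables (T : finType) (e : rel T).
Hypotheses (esym : symmetric e) (eirr : irreflexive e) (girth5 : girth_ge e 5).

Let edge_neq x y : e x y -> x != y.
Proof. by move=> xy; apply: contraTneq xy => ->; rewrite eirr. Qed.

Lemma no_triangle a b c : e a b -> e b c -> e c a -> False.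
Proof.
move=> ab bc ca; apply: (girth5 (k := 3) isT); exists [:: a; b; c]; split=> //.
  by rewrite /= !inE negb_or edge_neq // eq_sym edge_neq // edge_neq.
by rewrite /= ab bc ca.
Qed.

Lemma no_square a b c d :
  e a b -> e b c -> e c d -> e d a -> a != c -> b != d -> False.
Proof.
move=> ab bc cd da ac bd; apply: (girth5 (k := 4) isT).
exists [:: a; b; c; d]; split=> //; last by rewrite /= ab bc cd da.
by rewrite /= !inE !negb_or edge_neq // ac eq_sym edge_neq // edge_neq // bd edge_neq.
Qed.

(* An induced K_{p,q} has one side reduced to a single vertex c (two
   vertices on each side would form a 4-cycle), hence lies inside N[c]. *)
Lemma complete_bipartite_in_star S :
  induces_complete_bipartite e S -> exists c, S \subset closed_nbhd e c.
Proof.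
case/existsP=> A /existsP [B /and5P [/eqP defS _ /set0Pn [a aA] /set0Pn [b bB]]].
case/andP=> /forall_inP AB _.
have eAB a' b' : a' \in A -> b' \in B -> e a' b'.
  by move=> a'A b'B; exact: (forall_inP (AB a' a'A) b' b'B).
have [oneA | /forall_inPn [a' a'A a'a]] := boolP [forall a' in A, a' == a].
  exists a; apply/subsetP=> x; rewrite -defS in_closed_nbhd inE.
  by case/orP=> [/(forall_inP oneA) -> // | xB]; rewrite eAB ?orbT.
have [oneB | /forall_inPn [b' b'B b'b]] := boolP [forall b' in B, b' == b].
  exists b; apply/subsetP=> x; rewrite -defS in_closed_nbhd inE.
  by case/orP=> [xA | /(forall_inP oneB) -> //]; rewrite esym eAB ?orbT.
by case: (no_square (eAB a b aA bB) _ (eAB a' b' a'A b'B) _ _ _);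
  rewrite 1?esym ?eAB // eq_sym.
Qed.

(* Triangle-freeness: an edge inside N[w] is incident to w. *)
Lemma edge_in_star w x y :
  x \in closed_nbhd e w -> y \in closed_nbhd e w -> e x y -> x = w \/ y = w.
Proof.
rewrite !in_closed_nbhd => /orP [/eqP -> | wx]; first by left.
case/orP=> [/eqP -> | wy xy]; first by right.
by case: (no_triangle wx xy); rewrite esym.
Qed.

Lemma share_edge_stars u v :
  u != v -> share_edge e (closed_nbhd e u) (closed_nbhd e v) = e u v.
Proof.
move=> uv; apply/idP/idP => [|euv].
  case/exists_inP=> x /setIP [xu xv] /exists_inP [y /setIP [yu yv] xy].
  have [xu' | yu'] := edge_in_star xu yu xy;
    have [xv' | yv'] := edge_in_star xv yv xy.
  - by rewrite -xu' -xv' eqxx in uv.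
  - by rewrite -xu' -yv'.
  - by rewrite -yu' -xv' esym.
  - by rewrite -yu' -yv' eqxx in uv.
apply/exists_inP; exists u; first by rewrite inE !in_closed_nbhd eqxx esym euv orbT.
by apply/exists_inP; exists v; rewrite // inE !in_closed_nbhd eqxx euv orbT.
Qed.

Section MinDegreeTwo.
Hypothesis avoid : forall v c, exists2 y, e v y & y != c.

Lemma star_complete_bipartite v : induces_complete_bipartite e (closed_nbhd e v).
Proof.
have [y vy _] := avoid v v.
apply/existsP; exists [set v]; apply/existsP; exists [set y | e v y].
apply/and5P; split=> //.
- by rewrite disjoints1 inE eirr.
- by apply/set0Pn; exists v; rewrite inE.
- by apply/set0Pn; exists y; rewrite inE.
apply/and3P; split; apply/forall_inP=> a; rewrite inE.
- by move=> /eqP ->; apply/forall_inP=> b; rewrite inE.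
- by move=> /eqP ->; apply/forall_inP=> b; rewrite inE => /eqP ->; rewrite eirr.
- move=> va; apply/forall_inP=> b; rewrite inE => vb; apply/negP=> ab.
  by apply: (no_triangle va ab); rewrite esym.
Qed.

(* N[v] is maximal: an induced K_{p,q} containing it lies in some N[c], and
   c <> v would make c adjacent to v and to a second neighbour of v. *)
Lemma star_biclique v : is_biclique e (closed_nbhd e v).
Proof.
rewrite /is_biclique star_complete_bipartite; apply/forallP=> S'.
apply/implyP=> /andP [sub /complete_bipartite_in_star [c /subsetP Sc]].
have inS' x : e v x -> x \in S'.
  by move=> vx; apply: (subsetP sub); rewrite in_closed_nbhd vx orbT.
have vS' : v \in S' by apply: (subsetP sub); rewrite in_closed_nbhd eqxx.
have [cv | cv] := eqVneq c v.
  by rewrite eqEsubset sub andbT -cv; apply/subsetP.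
have ecv : e c v by move: (Sc v vS'); rewrite in_closed_nbhd eq_sym (negbTE cv).
have [y vy yc] := avoid v c.
have ecy : e c y by move: (Sc y (inS' y vy)); rewrite in_closed_nbhd (negbTE yc).
by case: (no_triangle ecv vy); rewrite esym.
Qed.

Lemma biclique_star S : is_biclique e S -> exists c, closed_nbhd e c = S.
Proof.
case/andP=> /complete_bipartite_in_star [c Sc] /forallP maxS.
by exists c; apply/eqP; apply: (implyP (maxS _)); rewrite Sc star_complete_bipartite.
Qed.

(* N[u] = N[v] forces u = v: otherwise u, v and a further neighbour of u
   would form a triangle. *)
Lemma star_inj : injective (closed_nbhd e).
Proof.
move=> u v Nuv; apply/eqP/negP=> /negP uv.
have evu : e v u.
  by have := in_closed_nbhd e v u; rewrite -Nuv in_closed_nbhd eqxx (negbTE uv).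
have [y uy yv] := avoid u v.
have evy : e v y.
  by have := in_closed_nbhd e u y; rewrite Nuv in_closed_nbhd (negbTE yv) uy orbT.
by case: (no_triangle evu uy); rewrite esym.
Qed.

Definition star_biclique_of (v : T) : biclique e :=
  exist _ (closed_nbhd e v) (star_biclique v).

(* v |-> N[v] is a bijection from the vertices onto the bicliques; a vertex
   x0 serves as a default value for the inverse map. *)
Lemma star_biclique_of_bij (x0 : T) : bijective star_biclique_of.
Proof.
pose inv (B : biclique e) := odflt x0 [pick c | closed_nbhd e c == val B].
exists inv => [v | B]; rewrite /inv.
  by case: pickP => [c /eqP /star_inj // | /(_ v)]; rewrite eqxx.
case: pickP => [c /eqP NcB | noc]; first exact: val_inj.
by have [c NcB] := biclique_star (valP B); move: (noc c); rewrite NcB eqxx.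
Qed.

End MinDegreeTwo.
End GirthFive.

Theorem mainTheorem6 (T : finType) (e : rel T) :
  simple_graph e ->
  connected_graph e ->
  has_edge e ->
  girth_ge e 5 ->
  (forall x : T, degree e x != 1) ->
  graph_iso e (@KBe_adj T e).
Proof.
move=> [esym eirr] conn he g5 nodeg1.
have avoid := neighbour_avoiding conn he nodeg1.
have [x0 _] := he.
exists (star_biclique_of esym eirr g5 avoid).
split; first exact: star_biclique_of_bij.
move=> u v; rewrite /KBe_adj.
have [<- | uv] := eqVneq u v; first by rewrite eqxx eirr.
rewrite (inj_eq (bij_inj (star_biclique_of_bij esym eirr g5 avoid x0))) uv /=.
exact: share_edge_stars.
Qed.
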